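(* Fix $p\in[1,\infty]$ and write $\|\cdot\|$ for the induced $\ell_p$ operator norm of matrices. Let $W^{(l)}\in\mathbb{R}^{n_l\times n_{l-1}}$ for $l=1,\dots,L$ and let $0\le\alpha^{(l)}\le\beta^{(l)}$ (elementwise) be vectors in $\mathbb{R}^{n_l}$ for $l=1,\dots,L-1$ (the slope bounds of the activations of an $L$-layer network $z^{(l)}=W^{(l)}a^{(l-1)}$, $a^{(l)}=\sigma^{(l)}(z^{(l)})$, $f=z^{(L)}$). Given loop-transformation vectors $d^{(l)}\in\mathbb{R}^{n_l}$, $l=1,\dots,L-1$, set $D^{(l)}=\mathrm{diag}(d^{(l)})$, $D'^{(l)}=\mathrm{diag}(\beta^{(l)}-d^{(l)})$ for $l\le L-1$, $D'^{(L)}=I$, and define $m^{(1)}=\|D'^{(1)}W^{(1)}\|$ and for $l=2,\dots,L$ $$m^{(l)}=\Big\|D'^{(l)}W^{(l)}\prod_{i=1}^{l-1}D^{(i)}W^{(i)}\Big\|+\sum_{j=1}^{l-1}\Big\|D'^{(l)}W^{(l)}\prod_{i=j+1}^{l-1}D^{(i)}W^{(i)}\Big\|\,m^{(j)}$$ (products ordered with the highest index on the left; empty product is the identity). Let $m^{(L)}(\mathcal{D})$ denote $m^{(L)}$ obtained with $d^{(l)}=\beta^{(l)}/2$ for all $l=1,\dots,L-1$, and $m^{(L)}(0)$ denote $m^{(L)}$ obtained with $d^{(l)}=0$ for all $l$ (the naive bound). Then $m^{(L)}(\mathcal{D})\le m^{(L)}(0)$. *)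

From HB Require Import structures.
From mathcomp Require Import all_boot all_order all_algebra.
From mathcomp Require Import all_classical all_reals.
From mathcomp Require Import ereal exp.
Set Implicit Arguments. Unset Strict Implicit. Unset Printing Implicit Defensive.
Import Order.TTheory GRing.Theory Num.Theory.
Local Open Scope ring_scope.
Local Open Scope classical_set_scope.

Section Defs.
Variable R : realType.

Definition lpnorm (p : \bar R) {k : nat} (x : 'cV[R]_k) : R :=
  match p with
  | +oo%E => \big[Num.max/0]_(i < k) `|x i 0|
  | r%:E => (\sum_(i < k) `|x i 0| `^ r) `^ r^-1
  | -oo%E => 0
  end.

Definition opnorm (p : \bar R) {a b : nat} (A : 'M[R]_(a, b)) : R :=
  sup [set lpnorm p (A *m x) | x in [set x : 'cV[R]_b | lpnorm p x <= 1]].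

Variables (p : \bar R) (L : nat) (n : nat -> nat).
Variable W : forall l : nat, 'M[R]_(n l, n l.-1).
Variable beta : forall l : nat, 'rV[R]_(n l).
Variable d : forall l : nat, 'rV[R]_(n l).

Definition idc (a b : nat) : 'M[R]_(n a, n b) :=
  \matrix_(i, k) ((a == b) && (i == k :> nat))%:R.

Definition Dm (l : nat) : 'M[R]_(n l) := diag_mx (d l).
Definition Dp (l : nat) : 'M[R]_(n l) :=
  if (l < L)%N then diag_mx (beta l - d l) else 1%:M.

(* Pfrom s j = D^(s) W^(s) ... D^(j+1) W^(j+1)  (identity if s = j) *)
Fixpoint Pfrom (s j : nat) : 'M[R]_(n s, n j) :=
  match s with
  | 0 => idc 0 j
  | s'.+1 => if j == s'.+1 then idc s'.+1 j
             else (Dm s'.+1 *m W s'.+1) *m Pfrom s' j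
  end.

(* value of m^(s+1) given previous values m^(1..s) *)
Definition mstep (s : nat) (prev : nat -> R) : R :=
  opnorm p (Dp s.+1 *m W s.+1 *m Pfrom s 0)
  + \sum_(1 <= j < s.+1) opnorm p (Dp s.+1 *m W s.+1 *m Pfrom s j) * prev j.

Fixpoint mtab (s : nat) : nat -> R :=
  match s with
  | 0 => fun _ => 0
  | s'.+1 => let prev := mtab s' in
             fun j => if j == s'.+1 then mstep s' prev else prev j
  end.

Definition mbound (l : nat) : R := mtab l l.
End Defs.

From Pilot Require Import Defs.
From HB Require Import structures.
From mathcomp Require Import all_boot all_order all_algebra.
From mathcomp Require Import all_classical all_reals.
From mathcomp Require Import ereal exp.
From mathcomp Require Import ring lra.
Set Implicit Arguments. Unset Strict Implicit.
Import Order.TTheory GRing.Theory Num.Theory.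
Local Open Scope ring_scope.

(* Take d = c beta with 0 <= c <= 1 and write N_s for the product of the
   norms of diag(beta^(i)) W^(i), i <= s.  Then D^(i) W^(i) = c diag(beta^(i)) W^(i)
   and, on hidden layers, D'^(i) W^(i) = (1 - c) diag(beta^(i)) W^(i).  By
   submultiplicativity the products in the recursion satisfy
   |D^(s) W^(s) ... D^(j+1) W^(j+1)| N_j <= c^(s-j) N_s, so by strong induction
   m^(l) <= (1 - c) N_l on hidden layers, and the identity
   c^s + (1 - c) (c^(s-1) + ... + 1) = 1 collapses the recursion to
   m^(s+1) <= |D'^(s+1) W^(s+1)| N_s.  For d = 0, the last term of the recursion
   alone gives m^(s+1) >= |D'^(s+1) W^(s+1)| m^(s) >= ... >= |D'^(s+1) W^(s+1)| N_s.
   Since D'^(L) = I whatever d is, both bounds meet at |W^(L)| N_(L-1). *)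

Section OperatorNorm.
Variables (R : realType) (p : \bar R).
Hypothesis p_ge1 : (1 <= p)%E.

Lemma lpnorm_ge0 {k} (x : 'cV[R]_k) : 0 <= lpnorm p x.
Proof.
case: p p_ge1 => [r| |] //= _; first exact: powR_ge0.
by apply: (big_ind (fun v => 0 <= v)) => // a b a0 b0; rewrite le_max a0.
Qed.

Lemma normr_coord_le_lpnorm {k} (x : 'cV[R]_k) i : `|x i 0| <= lpnorm p x.
Proof.
case: p p_ge1 => [r| |] //= r1; last by rewrite (bigD1 i) //= le_max lexx.
have r0 : r != 0 by rewrite gt_eqF // (lt_le_trans ltr01) // -lee_fin.
rewrite -[X in X <= _](@powRr1 _ `|x i 0|) // -(mulfV r0) powRrM.
apply: ge0_ler_powR; rewrite ?nnegrE ?invr_ge0 ?powR_ge0 ?sumr_ge0 //.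
  by rewrite (le_trans ler01) // -lee_fin.
by rewrite (bigD1 i) //= lerDl sumr_ge0 // => j _; rewrite powR_ge0.
Qed.

Lemma lpnormZ_le {k} c (x : 'cV[R]_k) : lpnorm p (c *: x) <= `|c| * lpnorm p x.
Proof.
case: p p_ge1 => [r| |] //= r1.
  have r0 : r != 0 by rewrite gt_eqF // (lt_le_trans ltr01) // -lee_fin.
  have S0 : 0 <= \sum_(i < k) `|x i 0| `^ r by rewrite sumr_ge0 // => j _; rewrite powR_ge0.
  under eq_bigr => i _ do rewrite mxE normrM powRM //.
  by rewrite -mulr_sumr powRM ?powR_ge0 // -powRrM mulfV // powRr1.
apply: (big_ind (fun v => v <= `|c| * _)).
- rewrite mulr_ge0 //.
  by apply: (big_ind (fun v => 0 <= v)) => // a b a0 b0; rewrite le_max a0.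
- by move=> a b ca cb; rewrite ge_max ca cb.
move=> i _; rewrite mxE normrM ler_wpM2l //.
by rewrite (bigD1 i) //= le_max lexx.
Qed.

Lemma lpnorm0 k : lpnorm p (0 : 'cV[R]_k) = 0.
Proof.
apply/le_anti; rewrite lpnorm_ge0 andbT.
by have := lpnormZ_le 0 (0 : 'cV[R]_k); rewrite scale0r normr0 mul0r.
Qed.

Lemma lpnorm_bounded k C : 0 <= C -> exists B, forall x : 'cV[R]_k,
  (forall i, `|x i 0| <= C) -> lpnorm p x <= B.
Proof.
move=> C0; case: p p_ge1 => [r| |] //= r1; last first.
  by exists C => x xC; apply: (big_ind (fun v => v <= C)) => // a b aC bC; rewrite ge_max aC bC.
have r0 : 0 <= r by rewrite (le_trans ler01) // -lee_fin.
exists ((C `^ r *+ k) `^ r^-1) => x xC.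
have S0 : 0 <= \sum_(i < k) `|x i 0| `^ r by rewrite sumr_ge0 // => j _; rewrite powR_ge0.
apply: ge0_ler_powR; rewrite ?nnegrE ?invr_ge0 ?mulrn_wge0 ?powR_ge0 //.
rewrite -[k in _ *+ k]card_ord -sumr_const ler_sum // => i _.
by apply: ge0_ler_powR; rewrite ?nnegrE.
Qed.

Lemma opnorm_has_sup {a b} (A : 'M[R]_(a, b)) :
  has_sup [set lpnorm p (A *m x) | x in [set x | lpnorm p x <= 1]].
Proof.
split; first by exists 0, 0; rewrite /= ?mulmx0 lpnorm0 ?ler01.
pose C := \sum_i \sum_j `|A i j|.
have [B xB] : exists B, forall x : 'cV[R]_a, (forall i, `|x i 0| <= C) -> lpnorm p x <= B.
  by apply: lpnorm_bounded; rewrite sumr_ge0 // => i _; rewrite sumr_ge0.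
exists B => _ [x x1 <-]; apply: xB => i; rewrite mxE.
apply: le_trans (ler_norm_sum _ _ _) _.
apply: (@le_trans _ _ (\sum_j `|A i j|)).
  apply: ler_sum => j _; rewrite normrM ler_piMr //.
  exact: le_trans (normr_coord_le_lpnorm x j) x1.
by rewrite /C (bigD1 i) //= lerDl sumr_ge0 // => i' _; rewrite sumr_ge0.
Qed.

Lemma opnorm_ub {a b} (A : 'M[R]_(a, b)) x :
  lpnorm p x <= 1 -> lpnorm p (A *m x) <= opnorm p A.
Proof. by move=> x1; apply: sup_upper_bound (opnorm_has_sup A) _ _; exists x. Qed.

Lemma opnorm_ge0 {a b} (A : 'M[R]_(a, b)) : 0 <= opnorm p A.
Proof. by have := @opnorm_ub _ _ A 0; rewrite mulmx0 !lpnorm0; apply. Qed.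

Lemma opnorm_le {a b} (A : 'M[R]_(a, b)) C :
  (forall x, lpnorm p x <= 1 -> lpnorm p (A *m x) <= C) -> opnorm p A <= C.
Proof.
move=> AC; apply: ge_sup; first exact: (opnorm_has_sup A).1.
by move=> _ [x x1 <-]; apply: AC.
Qed.

Lemma lpnorm_mulmx_le {a b} (A : 'M[R]_(a, b)) y :
  lpnorm p (A *m y) <= opnorm p A * lpnorm p y.
Proof.
have [y0|y_neq0] := eqVneq (lpnorm p y) 0.
  suff -> : y = 0 by rewrite mulmx0 lpnorm0 mulr_ge0 ?opnorm_ge0 ?lpnorm_ge0.
  apply/matrixP => i j; rewrite (ord1 j) mxE; apply/normr0_eq0/le_anti.
  by rewrite normr_ge0 -y0 normr_coord_le_lpnorm.
set t := lpnorm p y in y_neq0 *.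
have t_gt0 : 0 < t by rewrite lt0r y_neq0 lpnorm_ge0.
have -> : y = t *: (t^-1 *: y) by rewrite scalerA mulfV // scale1r.
rewrite -scalemxAr; apply: le_trans (lpnormZ_le _ _) _.
rewrite gtr0_norm // mulrC ler_pM2r //; apply: opnorm_ub.
apply: le_trans (lpnormZ_le _ _) _.
by rewrite gtr0_norm ?invr_gt0 // mulVf.
Qed.

Lemma opnormM_le {a b c} (A : 'M[R]_(a, b)) (B : 'M[R]_(b, c)) :
  opnorm p (A *m B) <= opnorm p A * opnorm p B.
Proof.
apply: opnorm_le => x x1; rewrite -mulmxA.
apply: le_trans (lpnorm_mulmx_le _ _) _; rewrite ler_wpM2l ?opnorm_ge0 //.
apply: le_trans (lpnorm_mulmx_le _ _) _.
by rewrite ler_piMr ?opnorm_ge0.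
Qed.

Lemma opnormZ_le {a b} c (A : 'M[R]_(a, b)) : opnorm p (c *: A) <= `|c| * opnorm p A.
Proof.
apply: opnorm_le => x x1; rewrite -scalemxAl.
by apply: le_trans (lpnormZ_le _ _) _; rewrite ler_wpM2l ?opnorm_ub.
Qed.

Lemma opnorm1_le k : opnorm p (1%:M : 'M[R]_k) <= 1.
Proof. by apply: opnorm_le => x; rewrite mul1mx. Qed.

End OperatorNorm.

Lemma geom_sum_complement (R : comPzRingType) (c : R) s :
  c ^+ s + (1 - c) * \sum_(1 <= j < s.+1) c ^+ (s - j) = 1.
Proof.
elim: s => [|s IHs]; first by rewrite big_geq // mulr0 addr0.
rewrite big_nat_recr //= subnn expr0.
under eq_big_nat => j /andP[_ js] do rewrite subSn // exprS.
rewrite -mulr_sumr exprS; set S := \sum_(1 <= j < s.+1) _ in IHs *.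
transitivity (c * (c ^+ s + (1 - c) * S) + (1 - c)); first ring.
by rewrite IHs mulr1 subrKC.
Qed.

Section LoopTransformation.
Variables (R : realType) (p : \bar R) (L : nat) (n : nat -> nat).
Variables (W : forall l : nat, 'M[R]_(n l, n l.-1)) (beta : forall l : nat, 'rV[R]_(n l)).
Hypothesis p_ge1 : (1 <= p)%E.

Local Notation opnorm := (opnorm p).
Local Notation mbound d := (mbound p L W beta d).
Local Notation Dp d := (Dp L beta d).

Lemma Pfrom_id d s : Pfrom W d s s = 1%:M.
Proof. by case: s => [|s] /=; rewrite ?eqxx; apply/matrixP => i j; rewrite !mxE eqxx. Qed.

Lemma Pfrom_S d s j : j != s.+1 -> Pfrom W d s.+1 j = Dm d s.+1 *m W s.+1 *m Pfrom W d s j.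
Proof. by move=> /negbTE /= ->. Qed.

Lemma mtab_mbound d s j : (0 < j <= s)%N -> mtab p L W beta d s j = mbound d j.
Proof.
elim: s => [|s IHs] /andP[j_gt0 js]; first by case: j j_gt0 js.
rewrite /= /Defs.mbound /=; case: eqP => [->|/eqP j_neq]; first by rewrite /= eqxx.
by apply: IHs; rewrite j_gt0 -ltnS ltn_neqAle j_neq.
Qed.

Lemma mboundS d s : mbound d s.+1 =
  opnorm (Dp d s.+1 *m W s.+1 *m Pfrom W d s 0)
  + \sum_(1 <= j < s.+1) opnorm (Dp d s.+1 *m W s.+1 *m Pfrom W d s j) * mbound d j.
Proof.
rewrite /Defs.mbound /= eqxx /mstep; congr (_ + _).
by apply: eq_big_nat => j /andP[j_gt0 js]; rewrite mtab_mbound // j_gt0 -ltnS.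
Qed.

Lemma mbound_ge0 d s : 0 <= mbound d s.
Proof.
suff mtab_ge0 t j : 0 <= mtab p L W beta d t j by apply: mtab_ge0.
elim: t j => [|t IHt] j //=; case: eqP => _ //.
by rewrite /mstep addr_ge0 ?opnorm_ge0 // sumr_ge0 // => i _; rewrite mulr_ge0 ?opnorm_ge0.
Qed.

Lemma mbound1 d : mbound d 1 = opnorm (Dp d 1 *m W 1).
Proof. by rewrite mboundS big_geq // addr0 (Pfrom_id d 0) mulmx1. Qed.

Lemma mbound_ge_last_term d s : opnorm (Dp d s.+2 *m W s.+2) * mbound d s.+1 <= mbound d s.+2.
Proof.
rewrite (mboundS d s.+1) big_nat_recr // Pfrom_id mulmx1 addrA lerDr.
by rewrite addr_ge0 ?opnorm_ge0 // sumr_ge0 // => i _; rewrite mulr_ge0 ?opnorm_ge0 ?mbound_ge0.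
Qed.

Lemma Dp_last d : Dp d L = 1%:M.
Proof. by rewrite /Defs.Dp ltnn. Qed.

Definition naive_bound s := \prod_(1 <= i < s.+1) opnorm (diag_mx (beta i) *m W i).

Lemma naive_bound0 : naive_bound 0 = 1.
Proof. by rewrite /naive_bound big_geq. Qed.

Lemma naive_boundS s : naive_bound s.+1 = naive_bound s * opnorm (diag_mx (beta s.+1) *m W s.+1).
Proof. by rewrite /naive_bound big_nat_recr. Qed.

Lemma naive_bound_ge0 s : 0 <= naive_bound s.
Proof. by apply: prodr_ge0 => i _; apply: opnorm_ge0. Qed.

Lemma mbound0_ge_naive s : (s < L)%N ->
  opnorm (Dp (fun l => 0) s.+1 *m W s.+1) * naive_bound s <= mbound (fun l => 0) s.+1.
Proof.
elim: s => [|s IHs] sL; first by rewrite mbound1 naive_bound0 mulr1.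
apply: le_trans _ (mbound_ge_last_term _ _); rewrite ler_wpM2l ?opnorm_ge0 //.
apply: (le_trans _ (IHs (ltnW sL))); rewrite naive_boundS mulrC.
by rewrite /Defs.Dp sL subr0.
Qed.

Section ScaledTransformation.
Variable c : R.
Hypothesis c01 : 0 <= c <= 1.

Local Notation dc := (fun l => c *: beta l).

Lemma DmW_scaled i : Dm dc i *m W i = c *: (diag_mx (beta i) *m W i).
Proof. by rewrite /Dm linearZ scalemxAl. Qed.

Lemma DpW_scaled i : (i < L)%N -> Dp dc i *m W i = (1 - c) *: (diag_mx (beta i) *m W i).
Proof. by move=> iL; rewrite /Defs.Dp iL -{1}[beta i]scale1r -scalerBl linearZ scalemxAl. Qed.

Lemma opnorm_Pfrom_scaled s j : (j <= s)%N ->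
  opnorm (Pfrom W dc s j) * naive_bound j <= c ^+ (s - j) * naive_bound s.
Proof.
have c_ge0 : 0 <= c by case/andP: c01.
elim: s => [|s IHs] js.
  by move: js; rewrite leqn0 => /eqP ->; rewrite Pfrom_id ler_wpM2r ?naive_bound_ge0 ?opnorm1_le.
have [->|j_neq] := eqVneq j s.+1.
  by rewrite Pfrom_id subnn expr0 ler_wpM2r ?naive_bound_ge0 ?opnorm1_le.
have {js}js : (j <= s)%N by rewrite -ltnS ltn_neqAle j_neq.
rewrite Pfrom_S // DmW_scaled subSn // exprS naive_boundS.
apply: le_trans (ler_wpM2r (naive_bound_ge0 _) (opnormM_le p_ge1 _ _)) _.
apply: le_trans (ler_wpM2r (naive_bound_ge0 _)
  (ler_wpM2r (opnorm_ge0 p_ge1 _) (opnormZ_le p_ge1 _ _))) _.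
rewrite ger0_norm // -!mulrA ler_wpM2l // [naive_bound s * _]mulrC [X in _ <= X]mulrCA.
by apply: ler_wpM2l; [apply: opnorm_ge0 | apply: IHs].
Qed.

Lemma mbound_scaled_le s :
  (forall j, (0 < j <= s)%N -> mbound dc j <= (1 - c) * naive_bound j) ->
  mbound dc s.+1 <= opnorm (Dp dc s.+1 *m W s.+1) * naive_bound s.
Proof.
move=> IH; set H := opnorm (Dp dc s.+1 *m W s.+1).
have H_ge0 : 0 <= H by apply: opnorm_ge0.
have c1_ge0 : 0 <= 1 - c by rewrite subr_ge0; case/andP: c01.
rewrite mboundS -[X in _ <= X]mulr1 -(geom_sum_complement c s) mulrDr; apply: lerD.
  apply: le_trans (opnormM_le p_ge1 _ _) _; rewrite -mulrA ler_wpM2l //.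
  by have := opnorm_Pfrom_scaled (leq0n s); rewrite naive_bound0 mulr1 subn0 mulrC.
rewrite !mulr_sumr; apply: ler_sum_nat => j /andP[j_gt0 js].
apply: le_trans (ler_wpM2r (mbound_ge0 _ _) (opnormM_le p_ge1 _ _)) _.
apply: le_trans (ler_wpM2l (mulr_ge0 H_ge0 (opnorm_ge0 p_ge1 _)) (IH j _)) _;
  first by rewrite j_gt0 -ltnS.
rewrite -!mulrA ler_wpM2l // mulrCA [X in _ <= X]mulrCA ler_wpM2l // [X in _ <= X]mulrC.
by apply: opnorm_Pfrom_scaled; rewrite -ltnS.
Qed.

Lemma mbound_scaled_hidden_le j : (0 < j < L)%N -> mbound dc j <= (1 - c) * naive_bound j.
Proof.
elim/ltn_ind: j => -[//|s] IH /andP[_ sL].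
apply: le_trans (mbound_scaled_le _) _.
  move=> j /andP[j_gt0 js]; apply: IH; first by rewrite ltnS.
  by rewrite j_gt0 (leq_ltn_trans js) // ltnW.
rewrite DpW_scaled // naive_boundS mulrCA mulrC ler_wpM2l ?naive_bound_ge0 //.
apply: le_trans (opnormZ_le p_ge1 _ _) _.
by rewrite ger0_norm // subr_ge0; case/andP: c01.
Qed.

Lemma mbound_scaled_le_mbound0 s : L = s.+1 ->
  mbound dc s.+1 <= mbound (fun l => 0) s.+1.
Proof.
move=> L_eq; have Dp_out d : Dp d s.+1 = 1%:M by rewrite -L_eq Dp_last.
apply: le_trans (mbound0_ge_naive _); last by rewrite L_eq.
apply: le_trans (mbound_scaled_le _) _; last by rewrite !Dp_out.
move=> j /andP[j_gt0 js]; apply: mbound_scaled_hidden_le.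
by rewrite j_gt0 L_eq ltnS.
Qed.

End ScaledTransformation.
End LoopTransformation.

Theorem proposition1 (R : realType) (p : \bar R) (L : nat) (n : nat -> nat)
  (W : forall l : nat, 'M[R]_(n l, n l.-1))
  (alpha beta : forall l : nat, 'rV[R]_(n l))
  (hp : (1 <= p)%E) (hL : (0 < L)%N)
  (hab : forall l : nat, (1 <= l < L)%N ->
         forall i : 'I_(n l), 0 <= alpha l 0 i /\ alpha l 0 i <= beta l 0 i) :
  mbound p L W beta (fun l => 2^-1 *: beta l) L
  <= mbound p L W beta (fun l => 0) L.
Proof.
case: L hL hab => [//|s] _ _.
apply: mbound_scaled_le_mbound0 => //; lra.
Qed.
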